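(* Let $n$ and $k$ be integers with $n\ge 1$. Then $$\mathfrak C_{2n}^{(k)}=\sum_{m=1}^{n}\frac{(-4)^{n-m}}{(2m+1)^k}\left[\!\!\left[n\atop m\right]\!\!\right],$$ where for $m=1,2,\dots,n$ $$\left[\!\!\left[n\atop m\right]\!\!\right]=\left[n\atop m\right]^2-2\left[n\atop m-1\right]\left[n\atop m+1\right]+2\left[n\atop m-2\right]\left[n\atop m+2\right]-\cdots+2(-1)^{m-1}\left[n\atop 1\right]\left[n\atop 2m-1\right],$$ that is, $\left[\!\!\left[n\atop m\right]\!\!\right]=\left[n\atop m\right]^2+2\sum_{j=1}^{m-1}(-1)^j\left[n\atop m-j\right]\left[n\atop m+j\right]$, and $\left[\!\!\left[n\atop 0\right]\!\!\right]=0$.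
   Context: For an integer $k$, the polylogarithm factorial function with level $2$ is ${\rm Lif}_{2,k}(z)=\sum_{m=0}^\infty\frac{z^{2m}}{(2m)!(2m+1)^k}$, and the poly-Cauchy numbers with level $2$, $\mathfrak C_n^{(k)}$, are defined by the generating function ${\rm Lif}_{2,k}({\rm arcsinh}\,t)=\sum_{n=0}^\infty\mathfrak C_n^{(k)}\frac{t^n}{n!}$, where ${\rm arcsinh}$ is the inverse hyperbolic sine. Here $\left[n\atop m\right]$ denotes the unsigned Stirling numbers of the first kind, defined by $x(x+1)\cdots(x+n-1)=\sum_{m=0}^n\left[n\atop m\right]x^m$, with $\left[n\atop m\right]=0$ for $m>n$. *)

(* formal power series computed via truncated polynomials over rat. *)
From mathcomp Require Import all_boot all_order all_algebra.
Set Implicit Arguments. Unset Strict Implicit. Unset Printing Implicit Defensive.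
Import Order.TTheory GRing.Theory Num.Theory.
Local Open Scope ring_scope.

Definition stirling1 (n m : nat) : int :=
  (\prod_(i < n) ('X + (i%:R)%:P : {poly int}))`_m.

Definition dstirling (n m : nat) : int :=
  stirling1 n m ^+ 2
  + 2 * \sum_(1 <= j < m) (-1) ^+ j * stirling1 n (m - j) * stirling1 n (m + j).

Definition asinh_coef (i : nat) : rat :=
  if odd i then
    let j := i./2 in
    (-1) ^+ j * ((2 * j)`!)%:R / ((4 ^ j * (j`!) ^ 2 * (2 * j + 1))%:R)
  else 0.

Definition asinh_poly (N : nat) : {poly rat} := \poly_(i < N.+1) asinh_coef i.

(* coefficient of z^(2m) in Lif_{2,k}(z) = \sum_m z^(2m) / ((2m)! (2m+1)^k) *)
Definition lif2_coef (k : int) (m : nat) : rat :=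
  1 / (((2 * m)`!)%:R * ((2 * m + 1)%:R : rat) ^ k).

(* Poly-Cauchy numbers with level 2: Lif_{2,k}(arcsinh t) = \sum_N C_N t^N / N!,
   as a formal composition (arcsinh has zero constant term, so only the
   terms with 2m <= N and coefficients of arcsinh up to t^N contribute). *)
Definition polyCauchy2 (k : int) (N : nat) : rat :=
  (N`!)%:R * \sum_(m < N.+1) lif2_coef k m * (asinh_poly N ^+ (2 * m))`_N.

(* The series y = arcsinh t solves (1 + t^2) y'' + t y' = 0 and has the first
   integral (1 + t^2) y'^2 = 1.  Consequently the coefficients of y^m satisfy a
   two-term recursion in the degree, which is the recursion of the coefficients
   of P_j(x) = prod_(l < j) (x^2 - (2l)^2) under j -> j + 1; this gives
   (2j)! [t^(2j)] y^m = m! [x^m] P_j, hence C_(2n) = sum_m [x^(2m)] P_n / (2m+1)^k.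
   Since P_n = prod (x + 2l) * prod (x - 2l) is a product of two rescaled rising
   factorials, with coefficients 2^(n-a) [n a] and (-2)^(n-a) [n a], the
   coefficient of x^(2m) is an alternating self-convolution of Stirling numbers,
   which folds around its middle term into (-4)^(n-m) [[n m]]. *)

From mathcomp Require Import all_boot all_order all_algebra.
From mathcomp Require Import ring zify.
Set Implicit Arguments. Unset Strict Implicit. Unset Printing Implicit Defensive.
Import Order.TTheory GRing.Theory Num.Theory.
Local Open Scope ring_scope.

Lemma big_ord_center (R : nmodType) (F : nat -> R) m :
  \sum_(a < (2 * m).+1) F a = F m + \sum_(1 <= j < m.+1) (F (m - j)%N + F (m + j)%N).
Proof.
rewrite big_split /= -(big_mkord xpredT F) (@big_cat_nat _ _ _ m) //=; last by lia.
rewrite [X in _ + X]big_ltn ?ltnS ?leq_pmull // addrCA.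
congr (_ + (_ + _)).
- rewrite big_nat_rev [RHS]big_add1 /=; apply: eq_bigr => j _; congr (F _); lia.
- rewrite -addn1 addnC big_addn.
  by apply: congr_big_nat => // [|j _]; [lia | rewrite addnC].
Qed.

Lemma alternating_convE (R : comRingType) (s : nat -> R) m :
  \sum_(a < (2 * m).+1) (-1) ^+ a * s a * s (2 * m - a)%N =
  (-1) ^+ m * (s m ^+ 2 +
               2 * \sum_(1 <= j < m.+1) (-1) ^+ j * s (m - j)%N * s (m + j)%N).
Proof.
rewrite (big_ord_center (fun a => (-1) ^+ a * s a * s (2 * m - a)%N)).
rewrite mulrDr mulr_sumr mulr_sumr; congr (_ + _).
  by rewrite (_ : 2 * m - m = m)%N ?expr2 ?mulrA //; lia.
rewrite big_nat_cond [RHS]big_nat_cond; apply: eq_bigr => j /andP[/andP[j_ge1 j_le_m] _].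
have -> : (2 * m - (m - j) = m + j)%N by lia.
have -> : (2 * m - (m + j) = m - j)%N by lia.
have sign_mj : (-1) ^+ (m - j) = (-1) ^+ m * (-1) ^+ j :> R.
  by rewrite -signr_odd oddB ?signr_addb ?signr_odd //; lia.
by rewrite sign_mj exprD; ring.
Qed.

Lemma coefMXaddC (R : nzRingType) (p : {poly R}) (c : R) a :
  (p * ('X + c%:P))`_a = (if a is a'.+1 then p`_a' else 0) + p`_a * c.
Proof. by rewrite mulrDr coefD coefMX coefMC; case: a. Qed.

Lemma stirling1S j a :
  stirling1 j.+1 a = (if a is a'.+1 then stirling1 j a' else 0) + stirling1 j a * j%:R.
Proof. by rewrite /stirling1 big_ord_recr coefMXaddC. Qed.

Lemma stirling10 j : stirling1 j 0 = (j == 0)%:R.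
Proof.
elim: j => [|j IHj]; first by rewrite /stirling1 big_ord0 coef1.
by rewrite stirling1S IHj add0r; case: j {IHj} => [|j]; rewrite ?mul0r ?mulr0.
Qed.

Lemma stirling1_eq0 j a : (j < a)%N -> stirling1 j a = 0.
Proof.
elim: j a => [|j IHj] [|a] //; first by rewrite /stirling1 big_ord0 coef1.
by rewrite ltnS stirling1S => lt_ja; rewrite !IHj ?mul0r ?addr0 // ltnW.
Qed.

Definition rising_poly (R : nzRingType) (c : R) j : {poly R} :=
  \prod_(l < j) ('X + (c * l%:R)%:P).

Lemma coef_rising_poly (R : comRingType) (c : R) j a :
  c ^+ a * (rising_poly c j)`_a = c ^+ j * (stirling1 j a)%:~R.
Proof.
rewrite /rising_poly; elim: j a => [|j IHj] a.
  rewrite big_ord0 coef1; case: a => [|a]; first by rewrite stirling10.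
  by rewrite stirling1_eq0 //= !mulr0.
rewrite big_ord_recr coefMXaddC stirling1S /= exprS.
set P := \prod_(l < j) _; case: a => [|a].
  have := IHj 0; rewrite !add0r expr0 !mul1r rmorphM /= rmorph_nat => ->; ring.
transitivity (c * (c ^+ a * P`_a) + c * j%:R * (c ^+ a.+1 * P`_a.+1)).
  by rewrite exprS; ring.
by rewrite !IHj rmorphD rmorphM /= rmorph_nat; ring.
Qed.

Lemma dstirling_eq0 n m : (n < m)%N -> dstirling n m = 0.
Proof.
move=> lt_nm; rewrite /dstirling stirling1_eq0 // expr0n add0r big1 ?mulr0 // => j _.
by rewrite [stirling1 n (m + j)]stirling1_eq0 ?mulr0 // ltn_addr.
Qed.

Lemma dstirlingn0 n : (0 < n)%N -> dstirling n 0 = 0.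
Proof. by move=> n_gt0; rewrite /dstirling big_geq // stirling10 (gtn_eqF n_gt0). Qed.

Lemma stirling1_alternating_conv n m : (0 < n)%N ->
  \sum_(a < (2 * m).+1) (-1) ^+ a * stirling1 n a * stirling1 n (2 * m - a) =
  (-1) ^+ m * dstirling n m.
Proof.
move=> n_gt0; have s_n0 : stirling1 n 0 = 0 by rewrite stirling10 (gtn_eqF n_gt0).
case: m => [|m]; first by rewrite big_ord1 dstirlingn0 // s_n0 !mulr0.
by rewrite alternating_convE big_nat_recr //= subnn s_n0 mulr0 mul0r addr0.
Qed.

Definition central_fact_poly (R : nzRingType) j : {poly R} :=
  \prod_(l < j) ('X^2 - ((2 * l) ^ 2)%:R%:P).

Lemma coef_central_fact_polyS (R : nzRingType) j m :
  (central_fact_poly R j.+1)`_m =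
  (if (m < 2)%N then 0 else (central_fact_poly R j)`_(m - 2))
  - (central_fact_poly R j)`_m * ((2 * j) ^ 2)%:R.
Proof. by rewrite /central_fact_poly big_ord_recr /= mulrBr coefB coefMXn coefMC. Qed.

Lemma central_fact_polyE (R : comRingType) j :
  central_fact_poly R j = rising_poly 2 j * rising_poly (-2) j.
Proof.
by rewrite -big_split; apply: eq_bigr => l _ /=; rewrite natrX natrM; ring.
Qed.

Lemma coef_central_fact_poly (R : comRingType) n m :
  4 ^+ m * (central_fact_poly R n)`_(2 * m) =
  (-4) ^+ n * (\sum_(a < (2 * m).+1)
                 (-1) ^+ a * stirling1 n a * stirling1 n (2 * m - a))%:~R.
Proof.
rewrite central_fact_polyE coefM rmorph_sum !mulr_sumr; apply: eq_bigr => -[a] /=.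
rewrite ltnS => le_a_2m _.
(* Split 4^m = 2^a 2^(2m-a) between the two rising factorials. *)
have -> : 4 ^+ m = (-1) ^+ a * (2 ^+ a * (-2) ^+ (2 * m - a)) :> R.
  rewrite -[-2 : R]mulN1r exprMn.
  transitivity ((-1) ^+ (a + (2 * m - a)) * 2 ^+ (a + (2 * m - a)) : R).
    by rewrite subnKC // !exprM sqrrN !expr1n mul1r; congr (_ ^+ _); ring.
  by rewrite !exprD; ring.
transitivity ((-1) ^+ a * ((2 ^+ a * (rising_poly (2 : R) n)`_a)
  * ((-2) ^+ (2 * m - a) * (rising_poly (-2 : R) n)`_(2 * m - a)))).
  by ring.
have -> : -4 = -2 * 2 :> R by ring.
by rewrite !coef_rising_poly !rmorphM /= rmorph_sign exprMn; ring.
Qed.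

Lemma coef_central_fact_poly_even (R : numDomainType) n m : (0 < n)%N ->
  (central_fact_poly R n)`_(2 * m) = (-4) ^+ (n - m) * (dstirling n m)%:~R.
Proof.
move=> n_gt0; have four_m_neq0 : (4 : R) ^+ m != 0 by rewrite expf_neq0 ?pnatr_eq0.
apply: (mulfI four_m_neq0); rewrite coef_central_fact_poly stirling1_alternating_conv //.
have [lt_nm | le_mn] := ltnP n m; first by rewrite dstirling_eq0 // !(mulr0, rmorph0).
have sign4 : (-4) ^+ m * (-1) ^+ m = 4 ^+ m :> R.
  by rewrite -exprMn; congr (_ ^+ _); ring.
by rewrite rmorphM /= rmorph_sign -{1}(subnK le_mn) exprD -sign4; ring.
Qed.

Lemma coefM_eq_upto (R : nzRingType) (p q r : {poly R}) i :
  (forall l, (l <= i)%N -> q`_l = r`_l) -> (p * q)`_i = (p * r)`_i.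
Proof. by move=> eq_qr; rewrite !coefM; apply: eq_bigr => l _; rewrite eq_qr ?leq_subr. Qed.

Definition asinh_ode (R : nzRingType) (p : {poly R}) : {poly R} :=
  (1 + 'X^2) * p^`()^`() + 'X * p^`().

Lemma coef_asinh_ode (R : comRingType) (p : {poly R}) i :
  (asinh_ode p)`_i = p`_i.+2 *+ (i.+2 * i.+1) + p`_i *+ i ^ 2.
Proof.
rewrite /asinh_ode mulrDl mul1r !coefD coefXnM coefXM !coef_deriv.
by case: i => [|[|i]] /=; rewrite ?subn0 ?subSS ?subn0 /=; ring.
Qed.

Lemma asinh_ode_exp (R : comRingType) (p : {poly R}) m :
  asinh_ode (p ^+ m) =
  (p ^+ m.-2 * ((1 + 'X^2) * p^`() ^+ 2)) *+ (m * m.-1) + (p ^+ m.-1 * asinh_ode p) *+ m.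
Proof.
rewrite /asinh_ode !deriv_exp derivMn derivM deriv_exp.
by case: m => [|[|m]] /=; rewrite ?exprS; ring.
Qed.

Section ArcsinhPowers.

Variables (R : numDomainType) (N : nat) (y : {poly R}).
Hypotheses (y0 : y`_0 = 0) (y1 : y`_1 = 1).
(* Truncations of arcsinh solve the equation only in low degrees. *)
Hypothesis y_ode : forall i, (i.+2 <= N)%N -> (asinh_ode y)`_i = 0.

Let h := (1 + 'X^2) * y^`() ^+ 2.

Lemma first_integral_deriv : h^`() = y^`() * asinh_ode y *+ 2.
Proof.
by rewrite /h /asinh_ode derivM derivD derivXn deriv_exp -polyC1 derivC polyC1 /=; ring.
Qed.

Lemma coef_first_integral l : (l < N)%N -> h`_l = (l == 0)%:R.
Proof.
case: l => [_ | l lt_l1N].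
  by rewrite coef0M coefD coef1 coefXn expr2 coef0M coef_deriv y1 addr0 !mulr1.
have ode_eq0 l' : (l' <= l)%N -> (asinh_ode y)`_l' = (0 : {poly R})`_l'.
  by move=> le_l'l; rewrite coef0 y_ode //; lia.
have := congr1 (fun p : {poly R} => p`_l) first_integral_deriv.
rewrite /= coef_deriv coefMn (coefM_eq_upto _ ode_eq0) mulr0 coef0 mul0rn.
by move/eqP; rewrite mulrn_eq0 => /eqP.
Qed.

Lemma coef_pow_rec m i : (i.+2 <= N)%N ->
  (y ^+ m)`_i.+2 *+ (i.+2 * i.+1) + (y ^+ m)`_i *+ i ^ 2 = (y ^+ m.-2)`_i *+ (m * m.-1).
Proof.
move=> le_i2N.
have h_eq1 l : (l <= i)%N -> h`_l = (1 : {poly R})`_l.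
  by move=> le_li; rewrite coef1 coef_first_integral //; lia.
have ode_eq0 l : (l <= i)%N -> (asinh_ode y)`_l = (0 : {poly R})`_l.
  by move=> le_li; rewrite coef0 y_ode //; lia.
rewrite -coef_asinh_ode asinh_ode_exp coefD !coefMn.
rewrite (coefM_eq_upto _ h_eq1) (coefM_eq_upto _ ode_eq0).
by rewrite mulr1 mulr0 coef0 mul0rn addr0.
Qed.

Lemma coef_pow_central_fact j m : (2 * j <= N)%N ->
  (y ^+ m)`_(2 * j) * (2 * j)`!%:R = m`!%:R * (central_fact_poly R j)`_m.
Proof.
elim: j m => [|j IHj] m le_2j_N.
  rewrite /central_fact_poly big_ord0 coef1 -horner_coef0 horner_exp horner_coef0 y0 expr0n.
  by case: m => [|m]; rewrite ?mulr1 ?mul0r ?mulr0.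
have {}IHj m' : (y ^+ m')`_(2 * j) * (2 * j)`!%:R =
    m'`!%:R * (central_fact_poly R j)`_m' by apply: IHj; lia.
rewrite coef_central_fact_polyS (_ : 2 * j.+1 = (2 * j).+2)%N; last by lia.
have le_i2N : ((2 * j).+2 <= N)%N by lia.
set i := (2 * j)%N in IHj le_i2N *.
transitivity ((y ^+ m)`_i.+2 *+ (i.+2 * i.+1) * i`!%:R).
  by rewrite !factS; ring.
rewrite -[X in X * _](addrK ((y ^+ m)`_i *+ i ^ 2)) coef_pow_rec //.
rewrite mulrBl !mulrnAl !IHj.
by case: m => [|[|m]] /=; rewrite ?subSS ?subn0 ?factS ?fact0; ring.
Qed.

End ArcsinhPowers.

Lemma asinh_coef_odd j : asinh_coef (2 * j).+1 =
  (-1) ^+ j * ((2 * j)`!)%:R / (4 ^ j * j`! ^ 2 * (2 * j + 1))%:R.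
Proof.
have half_j : uphalf (2 * j) = j by rewrite mul2n uphalf_double.
by rewrite /asinh_coef /= oddM half_j.
Qed.

Lemma asinh_coef_even j : asinh_coef (2 * j) = 0.
Proof. by rewrite /asinh_coef oddM. Qed.

Lemma asinh_coef_rec i :
  asinh_coef i.+2 *+ (i.+2 * i.+1) + asinh_coef i *+ i ^ 2 = 0.
Proof.
have [j [-> | ->]] : exists j, i = (2 * j).+1 \/ i = (2 * j)%N.
- exists i./2; move: (odd_double_half i); rewrite mul2n.
  by case: (odd i) => /= eq_i; [left | right]; rewrite -{1}eq_i.
- rewrite (_ : (2 * j).+3 = (2 * j.+1).+1)%N ?asinh_coef_odd; last by lia.
  rewrite exprS mulN1r !mulNr mulNrn -!mulrA -!mulrnAr addrC -mulrBr.
  apply/eqP; rewrite mulf_eq0 signr_eq0 subr_eq0 /=; apply/eqP.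
  rewrite !mulrnAr -!mulrnAl -!mulrnA; apply/eqP.
  rewrite eqr_div ?pnatr_eq0 -?natrM ?eqr_nat -?lt0n ?muln_gt0 ?expn_gt0 ?fact_gt0 ?addn1 //.
  rewrite (_ : 2 * j.+1 = (2 * j).+2)%N; last by lia.
  by rewrite factS factS factS [(4 ^ _.+1)%N]expnS; apply/eqP; ring.
- rewrite (_ : (2 * j).+2 = 2 * j.+1)%N; last by lia.
  by rewrite !asinh_coef_even !mul0rn addr0.
Qed.

Lemma coef_asinh_poly N i : (asinh_poly N)`_i = if (i <= N)%N then asinh_coef i else 0.
Proof. by rewrite coef_poly ltnS. Qed.

Lemma asinh_poly_ode N i : (i.+2 <= N)%N -> (asinh_ode (asinh_poly N))`_i = 0.
Proof.
move=> le_i2N; rewrite coef_asinh_ode !coef_asinh_poly le_i2N (ltnW (ltnW le_i2N)).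
exact: asinh_coef_rec.
Qed.

Lemma polyCauchy2_even k n : (0 < n)%N ->
  polyCauchy2 k (2 * n) =
  \sum_(m < (2 * n).+1) (central_fact_poly rat n)`_(2 * m) / (2 * m + 1)%:R ^ k.
Proof.
move=> n_gt0; set y := asinh_poly (2 * n).
have y0 : y`_0 = 0 by rewrite coef_asinh_poly.
have y1 : y`_1 = 1.
  by rewrite coef_asinh_poly (_ : 1 <= 2 * n)%N /asinh_coef /= ?divr1 //; lia.
rewrite /polyCauchy2 mulr_sumr; apply: eq_bigr => m _.
have fact_neq0 : ((2 * m)`!)%:R != 0 :> rat by rewrite pnatr_eq0 -lt0n fact_gt0.
apply: (mulfI fact_neq0).
rewrite [RHS]mulrA -(coef_pow_central_fact y0 y1 (@asinh_poly_ode _)) //.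
by rewrite /lif2_coef; field; rewrite fact_neq0 expfz_neq0 // pnatr_eq0 addn1.
Qed.

Theorem theorem1 (n : nat) (k : int) : (1 <= n)%N ->
  polyCauchy2 k (2 * n) =
  \sum_(1 <= m < n.+1)
     ((-4 : rat) ^+ (n - m) / ((2 * m + 1)%:R : rat) ^ k) * (dstirling n m)%:~R.
Proof.
move=> n_gt0; rewrite polyCauchy2_even //.
pose g m := (-4 : rat) ^+ (n - m) / (2 * m + 1)%:R ^ k * (dstirling n m)%:~R.
under eq_bigr => m _ do rewrite coef_central_fact_poly_even // mulrAC -/(g m).
rewrite -(big_mkord xpredT g) (@big_cat_nat _ _ _ n.+1) //=; last by lia.
have -> : \sum_(n.+1 <= m < (2 * n).+1) g m = 0.
  rewrite big_nat_cond big1 // => m /andP[/andP[lt_nm _] _].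
  by rewrite /g dstirling_eq0 // mulr0.
by rewrite addr0 big_ltn // {1}/g dstirlingn0 // mulr0 add0r.
Qed.
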